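(* Let $(\lambda_1,u_1)$ and $(\lambda_2,u_2)$ be two solution pairs of the system $(PAP-\lambda I)u=-b_0$, $\|u\|=\gamma$, $u\in\mathcal N(C^{\top})$, and let $f(u)=u^{\top}PAPu+2u^{\top}b_0$. Then $\lambda_1<\lambda_2$ if and only if $f(u_1)<f(u_2)$.
   Context: Let $A\in\mathbb{R}^{n\times n}$ be symmetric, $C\in\mathbb{R}^{n\times m}$ ($m<n$) full column rank, $b\in\mathbb{R}^m$, $n_0=C(C^{\top}C)^{-1}b$ with $\|n_0\|<1$, $\gamma=\sqrt{1-\|n_0\|^2}$, $P=I-C(C^{\top}C)^{-1}C^{\top}$ (orthogonal projector onto $\mathcal N(C^{\top})$), $b_0=PAn_0$. *)

From HB Require Import structures.
From mathcomp Require Import all_boot all_order all_algebra.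
Set Implicit Arguments. Unset Strict Implicit. Unset Printing Implicit Defensive.
Import Order.TTheory GRing.Theory Num.Theory.
Local Open Scope ring_scope.

Section Defs.
Variable R : rcfType.

Definition dotv k (u v : 'cV[R]_k) : R := (u^T *m v) 0 0.
Definition normv k (u : 'cV[R]_k) : R := Num.sqrt (dotv u u).

Definition n0v n m (C : 'M[R]_(n, m)) (b : 'cV[R]_m) : 'cV[R]_n :=
  C *m invmx (C^T *m C) *m b.

Definition gam n m (C : 'M[R]_(n, m)) (b : 'cV[R]_m) : R :=
  Num.sqrt (1 - normv (n0v C b) ^+ 2).

Definition Pproj n m (C : 'M[R]_(n, m)) : 'M[R]_n :=
  1%:M - C *m invmx (C^T *m C) *m C^T.

Definition b0v n m (A : 'M[R]_n) (C : 'M[R]_(n, m)) (b : 'cV[R]_m) : 'cV[R]_n :=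
  Pproj C *m A *m n0v C b.

Definition fobj n m (A : 'M[R]_n) (C : 'M[R]_(n, m)) (b : 'cV[R]_m)
  (u : 'cV[R]_n) : R :=
  dotv u (Pproj C *m A *m Pproj C *m u) + 2 * dotv u (b0v A C b).

Definition is_sol n m (A : 'M[R]_n) (C : 'M[R]_(n, m)) (b : 'cV[R]_m)
  (lam : R) (u : 'cV[R]_n) : Prop :=
  [/\ (Pproj C *m A *m Pproj C - lam%:M) *m u = - b0v A C b,
      normv u = gam C b &
      C^T *m u = 0].
End Defs.

(* If [M] is symmetric and [M u_i = lam_i u_i - b] with [|u_1| = |u_2| = g],
   then [f(u_i) = lam_i g^2 + u_i.b], and comparing [u_1.(M u_2)] with
   [u_2.(M u_1)] gives [(u_1 - u_2).b = (lam_2 - lam_1) u_1.u_2].  Together: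
   [2 (f(u_1) - f(u_2)) = (lam_1 - lam_2) |u_1 - u_2|^2],
   so [f] orders the solutions as [lam] does; when [u_1 = u_2] the shifted
   equations force [lam_1 = lam_2]. *)

From HB Require Import structures.
From mathcomp Require Import all_boot all_order all_algebra.
From mathcomp Require Import ring lra.
Import Order.TTheory GRing.Theory Num.Theory.
Set Implicit Arguments. Unset Strict Implicit. Unset Printing Implicit Defensive.
Local Open Scope ring_scope.

Section Dotv.
Variables (R : rcfType) (k : nat).
Implicit Types (u v w : 'cV[R]_k) (M : 'M[R]_k).

Lemma dotv_sum u v : dotv u v = \sum_i u i 0 * v i 0.
Proof. by rewrite /dotv mxE; apply: eq_bigr => i _; rewrite mxE. Qed.

Lemma dotvC u v : dotv u v = dotv v u.
Proof. by rewrite !dotv_sum; apply: eq_bigr => i _; rewrite mulrC. Qed.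

Lemma dotvDr u v w : dotv u (v + w) = dotv u v + dotv u w.
Proof. by rewrite /dotv mulmxDr mxE. Qed.

Lemma dotvNr u v : dotv u (- v) = - dotv u v.
Proof. by rewrite /dotv mulmxN mxE. Qed.

Lemma dotvBr u v w : dotv u (v - w) = dotv u v - dotv u w.
Proof. by rewrite dotvDr dotvNr. Qed.

Lemma dotvBl u v w : dotv (u - v) w = dotv u w - dotv v w.
Proof. by rewrite dotvC dotvBr !(dotvC w). Qed.

Lemma dotvZr u v a : dotv u (a *: v) = a * dotv u v.
Proof. by rewrite /dotv -scalemxAr mxE. Qed.

Lemma dotv_mulmxr u v M : dotv u (M *m v) = dotv (M^T *m u) v.
Proof. by rewrite /dotv trmx_mul trmxK mulmxA. Qed.

Lemma dotvv_ge0 u : 0 <= dotv u u.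
Proof. by rewrite dotv_sum; apply: sumr_ge0 => i _; rewrite -expr2 sqr_ge0. Qed.

Lemma dotvv_eq0 u : (dotv u u == 0) = (u == 0).
Proof.
apply/eqP/eqP => [|->]; last by rewrite /dotv mulmx0 mxE.
rewrite dotv_sum => /psumr_eq0P sq0; apply/matrixP => i j.
rewrite (ord1 j) !mxE; apply/eqP; rewrite -sqrf_eq0 expr2.
by rewrite sq0 // => l _; rewrite -expr2 sqr_ge0.
Qed.

Lemma dotvv_gt0 u : u != 0 -> 0 < dotv u u.
Proof. by rewrite -dotvv_eq0 lt_def dotvv_ge0 andbT. Qed.

Lemma dotvv_normv u : dotv u u = normv u ^+ 2.
Proof. by rewrite sqr_sqrtr // dotvv_ge0. Qed.

Lemma dotvv_subr u v :
  dotv (u - v) (u - v) = dotv u u + dotv v v - 2 * dotv u v.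
Proof. by rewrite !(dotvBl, dotvBr) (dotvC v u); ring. Qed.

End Dotv.

Lemma trmx_Pproj (R : rcfType) n m (C : 'M[R]_(n, m)) : (Pproj C)^T = Pproj C.
Proof.
rewrite /Pproj linearB /= trmx1 !trmx_mul trmxK trmx_inv trmx_mul trmxK.
by rewrite mulmxA.
Qed.

Lemma mulmx_subr_scalar_eqN (R : pzRingType) k (M : 'M[R]_k) lam
    (u b : 'cV[R]_k) :
  (M - lam%:M) *m u = - b -> M *m u = lam *: u - b.
Proof. by rewrite mulmxBl mul_scalar_mx => <-; rewrite addrC subrK. Qed.

Section ShiftedEigen.
Variables (R : rcfType) (k : nat) (M : 'M[R]_k) (b : 'cV[R]_k).
Hypothesis symM : M^T = M.

Definition qobj (u : 'cV[R]_k) : R := dotv u (M *m u) + 2 * dotv u b.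

Variables (lam1 lam2 : R) (u1 u2 : 'cV[R]_k).
Hypotheses (eq1 : M *m u1 = lam1 *: u1 - b) (eq2 : M *m u2 = lam2 *: u2 - b).

Lemma qobj_shifted lam u :
  M *m u = lam *: u - b -> qobj u = lam * dotv u u + dotv u b.
Proof. by rewrite /qobj => ->; rewrite dotvBr dotvZr; ring. Qed.

Lemma dotv_shifted_subl : dotv (u1 - u2) b = (lam2 - lam1) * dotv u1 u2.
Proof.
have cross : dotv u1 (M *m u2) = dotv u2 (M *m u1).
  by rewrite dotv_mulmxr symM dotvC.
move: cross; rewrite eq1 eq2 !(dotvBr, dotvZr) (dotvC u2 u1) dotvBl.
by move=> cross; rewrite mulrBl; lra.
Qed.

Lemma qobj_shifted_gap :
  dotv u1 u1 = dotv u2 u2 ->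
  2 * (qobj u1 - qobj u2) = (lam1 - lam2) * dotv (u1 - u2) (u1 - u2).
Proof.
move=> eqn; have cross := dotv_shifted_subl.
rewrite (qobj_shifted eq1) (qobj_shifted eq2) dotvv_subr -eqn.
by rewrite dotvBl in cross; rewrite mulrBl in cross |- *; lra.
Qed.

Lemma shifted_eigen_eq : u1 = u2 -> u1 != 0 -> lam1 = lam2.
Proof.
move=> eq12 u1n0; move: eq2; rewrite -eq12 eq1 => /addIr/eqP.
by rewrite -subr_eq0 -scalerBl scaler_eq0 (negPf u1n0) orbF subr_eq0 => /eqP.
Qed.

End ShiftedEigen.

Lemma dotvv_gam (R : rcfType) n m (C : 'M[R]_(n, m)) (b : 'cV[R]_m)
    (u : 'cV[R]_n) :
  normv (n0v C b) < 1 -> normv u = gam C b ->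
  dotv u u = 1 - normv (n0v C b) ^+ 2 /\ 0 < dotv u u.
Proof.
move=> n0lt1 normu.
have gpos : 0 < 1 - normv (n0v C b) ^+ 2.
  by rewrite subr_gt0 expr_lt1 // sqrtr_ge0.
by rewrite dotvv_normv normu sqr_sqrtr ?ltW.
Qed.

Theorem lemma2p1 (R : rcfType) (n m : nat) (A : 'M[R]_n) (C : 'M[R]_(n, m))
  (b : 'cV[R]_m) (lam1 lam2 : R) (u1 u2 : 'cV[R]_n) :
  (m < n)%N ->
  A^T = A ->
  \rank C = m ->
  normv (n0v C b) < 1 ->
  is_sol A C b lam1 u1 ->
  is_sol A C b lam2 u2 ->
  (lam1 < lam2) <-> (fobj A C b u1 < fobj A C b u2).
Proof.
move=> _ symA _ n0lt1 [/mulmx_subr_scalar_eqN eq1 norm1 _].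
move=> [/mulmx_subr_scalar_eqN eq2 norm2 _].
set M := Pproj C *m A *m Pproj C in eq1 eq2.
change (lam1 < lam2 <-> qobj M (b0v A C b) u1 < qobj M (b0v A C b) u2).
have symM : M^T = M by rewrite !trmx_mul trmx_Pproj symA mulmxA.
have [g1 pos1] := dotvv_gam n0lt1 norm1.
have [g2 _] := dotvv_gam n0lt1 norm2.
have gap := qobj_shifted_gap symM eq1 eq2 (etrans g1 (esym g2)).
have [eq12 | neq12] := eqVneq u1 u2.
  have u1n0 : u1 != 0 by rewrite -dotvv_eq0 gt_eqF.
  by rewrite (shifted_eigen_eq eq1 eq2 eq12 u1n0) eq12 !ltxx.
have pos12 : 0 < dotv (u1 - u2) (u1 - u2) by rewrite dotvv_gt0 // subr_eq0.
by split=> lt; nra.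
Qed.
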